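(* In the $\beta$-model with true parameter satisfying $\beta_1=\cdots=\beta_r$, for a fixed positive integer $r$, $$\|W_{22}-\widetilde W_{22}\|_{\max}\lesssim\frac{b_n^6}{n^3c_n^5},$$ where $W_{22}$ is the bottom-right $(n-r)\times(n-r)$ block of $W=V^{-1}-S$ and $\widetilde W_{22}$ is the bottom-right $(n-r)\times(n-r)$ block of $\widetilde W=\widetilde V^{-1}-\widetilde S$.
   Context: $\beta$-model: $a_{ij}=a_{ji}\in\{0,1\}$, $1\le i<j\le n$, independent with $P(a_{ij}=1)=e^{\beta_i+\beta_j}/(1+e^{\beta_i+\beta_j})$, $a_{ii}=0$; $d_i=\sum_{j\ne i}a_{ij}$. $V=(v_{ij})$ with $v_{ij}=e^{\beta_i+\beta_j}/(1+e^{\beta_i+\beta_j})^2$ ($i\ne j$), $v_{ii}=\sum_{j\ne i}v_{ij}$; $S=\mathrm{diag}(1/v_{11},\dots,1/v_{nn})$. $\widetilde{\mathbf d}=(\sum_{i=1}^rd_i,d_{r+1},\dots,d_n)^\top$, $\widetilde V=(\tilde v_{ij})$ its covariance matrix, $\widetilde S=\mathrm{diag}(1/\tilde v_{11},1/v_{r+1,r+1},\dots,1/v_{nn})$. $\|J\|_{\max}=\max_{i,j}|J_{ij}|$. $b_n=\max_{i\neq j}(1+e^{\beta_i+\beta_j})^2/e^{\beta_i+\beta_j}$, $c_n=\min_{i\ne j}(\cdot)$. $x\lesssim y$ means $x\le Cy$ for a constant $C$ independent of $n$. *)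

From HB Require Import structures.
From mathcomp Require Import all_boot all_order all_algebra.
From mathcomp Require Import reals.
From mathcomp Require Import sequences exp.
Set Implicit Arguments. Unset Strict Implicit. Unset Printing Implicit Defensive.
Import Order.TTheory GRing.Theory Num.Theory.
Local Open Scope ring_scope.

Section BetaModel.
Variables (R : realType) (n : nat) (beta : 'I_n -> R).

Definition vij (i j : 'I_n) : R :=
  expR (beta i + beta j) / (1 + expR (beta i + beta j)) ^+ 2.

Definition Vmat : 'M[R]_n :=
  \matrix_(i, j) if i == j then \sum_(k < n | k != i) vij i k else vij i j.

Definition Smat : 'M[R]_n :=
  \matrix_(i, j) if i == j then (Vmat i i)^-1 else 0.

Definition Wmat : 'M[R]_n := invmx Vmat - Smat.

Definition bn : R :=
  \big[Num.max/0]_(i < n) \big[Num.max/0]_(j < n | j != i) (vij i j)^-1.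

(* c_n = min_{i<>j} 1/v_ij (the default bn is an upper bound for all terms) *)
Definition cn : R :=
  \big[Num.min/bn]_(i < n) \big[Num.min/bn]_(j < n | j != i) (vij i j)^-1.

Variable r : nat.

(* Aggregation matrix A with  d~ = A d,
   d~_0 = sum_{i<r} d_i,  d~_k = d_{r+k-1} for k >= 1 (0-based indices). *)
Definition Aggr : 'M[R]_((n - r).+1, n) :=
  \matrix_(k, j) if (k == 0 :> nat)%N then ((j < r)%N)%:R
                 else ((j == r + k - 1 :> nat)%N)%:R.

(* Covariance matrix of d~ : Cov(A d) = A Cov(d) A^T = A V A^T. *)
Definition Vtmat : 'M[R]_((n - r).+1) := Aggr *m Vmat *m Aggr^T.

Definition Stmat : 'M[R]_((n - r).+1) :=
  \matrix_(i, j) if i == j then (Vtmat i i)^-1 else 0.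

Definition Wtmat : 'M[R]_((n - r).+1) := invmx Vtmat - Stmat.

End BetaModel.

From HB Require Import structures.
From mathcomp Require Import all_boot all_order all_algebra.
From mathcomp Require Import reals.
From mathcomp Require Import sequences exp.
From mathcomp Require Import perm zify ring lra.
Import Order.TTheory GRing.Theory Num.Theory.

(* When beta_1 = ... = beta_r the matrix V is invariant under transpositions
   of the first r indices, hence commutes with the projection Q that replaces
   the first r coordinates by their mean.  V is invertible once n >= 3, since
   x V x^T = sum_(i<j) v_ij (x_i + x_j)^2 vanishes only at x = 0.  If A is
   the aggregation matrix (d~ = A d) and M is A with its first row divided by
   r, then A M^T = 1, Q = A^T M and A Q = A, so
   V~^{-1} = (A V A^T)^{-1} = M V^{-1} M^T.  For i >= r the rows of A and M
   indexed by i - r + 1 are the unit vector e_i, so W_22 and W~_22 coincide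
   entrywise and the bound holds with any constant. *)

Set Implicit Arguments.
Unset Strict Implicit.
Unset Printing Implicit Defensive.
Local Open Scope ring_scope.

Section SignlessLaplacian.
Variables (R : realFieldType) (n : nat) (w : 'I_n -> 'I_n -> R).

Definition signless_laplacian : 'M[R]_n :=
  \matrix_(i, j) if i == j then \sum_(k < n | k != i) w i k else w i j.

Lemma signless_laplacian_perm (s : 'S_n) :
    (forall i j, w (s i) (s j) = w i j) ->
  forall i j, signless_laplacian (s i) (s j) = signless_laplacian i j.
Proof.
move=> ws i j; rewrite !mxE (inj_eq perm_inj); case: eqP => // _.
rewrite (reindex_inj (h := s) perm_inj) /=.
by apply: eq_big => [k|k _]; rewrite ?(inj_eq perm_inj) ?ws.
Qed.

Hypothesis wC : forall i j, w i j = w j i.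

Lemma signless_laplacian_sym i j :
  signless_laplacian i j = signless_laplacian j i.
Proof. by rewrite !mxE eq_sym; case: eqP => [->|]. Qed.

Lemma signless_laplacian_quad (x : 'rV[R]_n) :
  2 * (x *m signless_laplacian *m x^T) 0 0
  = \sum_a \sum_(b | b != a) w a b * (x 0 a + x 0 b) ^+ 2.
Proof.
have expand : (x *m signless_laplacian *m x^T) 0 0
    = \sum_a \sum_(b | b != a) w a b * (x 0 a ^+ 2 + x 0 a * x 0 b).
  rewrite mxE; apply: eq_bigr => a _; rewrite !mxE (bigD1 a) //= mxE eqxx.
  under [RHS]eq_bigr do rewrite mulrDr.
  rewrite mulrDl big_split /=; congr (_ + _).
    by rewrite mulr_sumr mulr_suml; apply: eq_bigr => b _; ring.
  rewrite mulr_suml; apply: eq_bigr => b ba; rewrite mxE (negbTE ba) wC; ring.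
have swap : \sum_a \sum_(b | b != a) w a b * x 0 b ^+ 2
          = \sum_a \sum_(b | b != a) w a b * x 0 a ^+ 2.
  under eq_bigr do rewrite big_mkcond; rewrite exchange_big /=.
  apply: eq_bigr => a _; rewrite [RHS]big_mkcond; apply: eq_bigr => b _.
  by rewrite eq_sym wC.
pose sq := \sum_a \sum_(b | b != a) w a b * x 0 a ^+ 2.
pose cross := \sum_a \sum_(b | b != a) w a b * (x 0 a * x 0 b).
have -> : (x *m signless_laplacian *m x^T) 0 0 = sq + cross.
  rewrite expand -big_split; apply: eq_bigr => a _.
  rewrite -big_split; apply: eq_bigr => b _; rewrite /=; ring.
have -> : \sum_a \sum_(b | b != a) w a b * (x 0 a + x 0 b) ^+ 2
    = sq + \sum_a \sum_(b | b != a) w a b * x 0 b ^+ 2 + 2 * cross.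
  rewrite mulr_sumr -!big_split; apply: eq_bigr => a _.
  by rewrite mulr_sumr -!big_split; apply: eq_bigr => b _; rewrite /=; ring.
by rewrite swap -/sq; ring.
Qed.

Hypothesis w_gt0 : forall i j, i != j -> 0 < w i j.

Lemma signless_laplacian_unit : (2 < n)%N -> signless_laplacian \in unitmx.
Proof.
move=> n_gt2; rewrite -row_free_unit; apply: inj_row_free => x xL0.
have pair0 a b : b != a -> x 0 a + x 0 b = 0.
  move=> ba.
  have quad0 : \sum_a \sum_(b | b != a) w a b * (x 0 a + x 0 b) ^+ 2 = 0.
    by rewrite -signless_laplacian_quad xL0 mul0mx mxE mulr0.
  have term_ge0 a' b' : b' != a' -> 0 <= w a' b' * (x 0 a' + x 0 b') ^+ 2.
    by move=> b'a'; rewrite mulr_ge0 ?sqr_ge0 // ltW // w_gt0 // eq_sym.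
  have row0 := psumr_eq0P (fun a' _ => sumr_ge0 _ (term_ge0 a')) quad0 (i := a) isT.
  have /eqP := psumr_eq0P (term_ge0 a) row0 (i := b) ba.
  have ab : a != b by rewrite eq_sym.
  by rewrite mulf_eq0 (gt_eqF (w_gt0 ab)) sqrf_eq0 => /eqP.
apply/rowP => a; rewrite mxE.
have [b [c [ba ca cb]]] : exists b c : 'I_n, [/\ b != a, c != a & c != b].
  pose o k (k_lt3 : (k < 3)%N) : 'I_n := Ordinal (leq_trans k_lt3 n_gt2).
  have [a0|a_neq0] := eqVneq (val a) 0%N.
    by exists (o 1%N isT), (o 2%N isT); split; rewrite -val_eqE ?a0.
  have [a1|a_neq1] := eqVneq (val a) 1%N.
    by exists (o 0%N isT), (o 2%N isT); split; rewrite -val_eqE ?a1.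
  by exists (o 0%N isT), (o 1%N isT); split; rewrite -val_eqE //= eq_sym.
have := pair0 _ _ ba; have := pair0 _ _ ca; have := pair0 _ _ cb; lra.
Qed.
End SignlessLaplacian.

Section FiberAveraging.
Variables (R : numFieldType) (m n : nat) (f : 'I_n -> 'I_m).

Definition fiber_card (k : 'I_m) : nat := #|[pred a | f a == k]|.

Definition incidence_mx : 'M[R]_(m, n) := \matrix_(k, j) (f j == k)%:R.

Definition fiber_mean_mx : 'M[R]_(m, n) :=
  \matrix_(k, j) ((f j == k)%:R / (fiber_card k)%:R).

Local Notation fiber_proj := (incidence_mx^T *m fiber_mean_mx).

Lemma fiber_mean_const k (c : R) :
  (exists a, f a = k) -> (\sum_(j | f j == k) c) / (fiber_card k)%:R = c.
Proof.
move=> [a fa]; rewrite sumr_const -[c *+ _]mulr_natr mulfK // pnatr_eq0 -lt0n.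
by apply/card_gt0P; exists a; rewrite unfold_in /= fa; apply: eqxx.
Qed.

Lemma fiber_projE a b :
  fiber_proj a b = (f a == f b)%:R / (fiber_card (f a))%:R.
Proof.
rewrite mxE (bigD1 (f a)) //= big1 => [|k ka].
  by rewrite !mxE eqxx mul1r addr0 eq_sym.
by rewrite !mxE [f a == _]eq_sym (negbTE ka) mul0r.
Qed.

Lemma fiber_projC a b : fiber_proj a b = fiber_proj b a.
Proof. by rewrite !fiber_projE eq_sym; case: eqP => [->|]; rewrite ?mul0r. Qed.

Lemma sum_incidence k (g : 'I_n -> R) :
  \sum_j incidence_mx k j * g j = \sum_(j | f j == k) g j.
Proof.
rewrite [RHS]big_mkcond; apply: eq_bigr => j _.
by rewrite mxE; case: (f j == k); rewrite ?mul1r ?mul0r.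
Qed.

Lemma fiber_proj_mulmxE (X : 'M[R]_n) a b :
  (fiber_proj *m X) a b = (\sum_(j | f j == f a) X j b) / (fiber_card (f a))%:R.
Proof.
rewrite mxE mulr_suml [RHS]big_mkcond; apply: eq_bigr => j _.
by rewrite fiber_projE eq_sym; case: (f j == f a); rewrite ?mul0r // mul1r mulrC.
Qed.

Lemma mulmx_fiber_projE (X : 'M[R]_n) a b :
  (X *m fiber_proj) a b = (\sum_(j | f j == f b) X a j) / (fiber_card (f b))%:R.
Proof.
rewrite mxE mulr_suml [RHS]big_mkcond; apply: eq_bigr => j _.
rewrite fiber_projC fiber_projE eq_sym.
by case: (f j == f b); rewrite ?mul0r ?mulr0 ?mul1r.
Qed.

Lemma incidence_mul_fiber_proj : incidence_mx *m fiber_proj = incidence_mx.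
Proof.
apply/matrixP => k b; rewrite mxE sum_incidence.
under eq_bigr => a /eqP fa do rewrite fiber_projE fa.
rewrite [RHS]mxE eq_sym; have [fb|] := eqVneq (f b) k.
  by rewrite -mulr_suml fiber_mean_const //; exists b.
by move=> _; rewrite big1 // => a _; rewrite mul0r.
Qed.

Lemma incidence_mul_fiber_mean_tr :
  (forall k, exists a, f a = k) -> incidence_mx *m fiber_mean_mx^T = 1%:M.
Proof.
move=> f_surj; apply/matrixP => k l; rewrite mxE.
under eq_bigr do rewrite [_^T _ _]mxE.
rewrite sum_incidence; under eq_bigr => j /eqP fj do rewrite mxE fj.
rewrite [RHS]mxE; have [<-|] := eqVneq k l; first by rewrite -mulr_suml fiber_mean_const.
by move=> _; rewrite big1 // => j _; rewrite mul0r.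
Qed.

Lemma tperm_fiber x y j : f x = f y -> f (tperm x y j) = f j.
Proof. by move=> fxy; case: tpermP => [->|->|]. Qed.

Lemma fiber_proj_commute (V : 'M[R]_n) :
    (forall i j, V i j = V j i) ->
    (forall x y, f x = f y -> forall i j, V (tperm x y i) (tperm x y j) = V i j) ->
  V *m fiber_proj = fiber_proj *m V.
Proof.
move=> VC Vinv; apply/matrixP => a b.
rewrite mulmx_fiber_projE fiber_proj_mulmxE.
have [fab|fab] := eqVneq (f a) (f b).
  rewrite -fab; congr (_ / _).
  rewrite (reindex_inj (h := tperm a b) perm_inj) /=.
  apply: eq_big => [j|j _]; first by rewrite tperm_fiber.
  by rewrite -{1}(tpermR a b) Vinv // VC.
have neq_fiber c j : f c != f j -> c != j by apply: contra_neq => ->.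
transitivity (V a b).
  rewrite (eq_bigr (fun=> V a b)) => [|j /eqP fj].
    by rewrite fiber_mean_const //; exists b.
  have ja : j != a by apply: neq_fiber; rewrite fj eq_sym.
  have ba : b != a by apply: neq_fiber; rewrite eq_sym.
  by rewrite -(Vinv j b) // tpermL tpermD.
rewrite (eq_bigr (fun=> V a b)) => [|j /eqP fj].
  by rewrite fiber_mean_const //; exists a.
have jb : j != b by apply: neq_fiber; rewrite fj.
have ab : a != b by apply: neq_fiber.
by rewrite -(Vinv j a) // tpermL tpermD.
Qed.

Section SingletonFiber.
Variables (i : 'I_n) (fiber_i : forall a, f a = f i -> a = i).

Lemma fiber_singleton a : (f a == f i) = (a == i).
Proof. by apply/eqP/eqP => [/fiber_i|->]. Qed.

Lemma incidence_mxE_singleton b : incidence_mx (f i) b = (b == i)%:R.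
Proof. by rewrite mxE fiber_singleton. Qed.

Lemma fiber_mean_mxE_singleton b : fiber_mean_mx (f i) b = (b == i)%:R.
Proof.
have card1 : fiber_card (f i) = 1%N.
  by rewrite /fiber_card -(card1 i); apply: eq_card => a; rewrite !inE fiber_singleton.
by rewrite mxE card1 divr1 fiber_singleton.
Qed.
End SingletonFiber.
End FiberAveraging.

Lemma mulmx_conj_delta_rows (R : comPzRingType) m n (P : 'M[R]_(m, n)) (X : 'M[R]_n)
    k l i j :
    (forall b, P k b = (b == i)%:R) -> (forall b, P l b = (b == j)%:R) ->
  (P *m X *m P^T) k l = X i j.
Proof.
have sum_delta (F : 'I_n -> R) c : \sum_b F b * (b == c)%:R = F c.
  rewrite (bigD1 c) //= eqxx mulr1 big1 ?addr0 // => b /negbTE ->.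
  exact: mulr0.
move=> Pk Pl; rewrite mxE; under eq_bigr do rewrite [_^T _ _]mxE Pl.
rewrite sum_delta mxE; under eq_bigr do rewrite Pk mulrC.
exact: sum_delta.
Qed.

Lemma invmx_compress (F : fieldType) m n (A M : 'M[F]_(m, n)) (V : 'M[F]_n) :
    V \in unitmx -> A *m M^T = 1%:M -> A *m (A^T *m M) = A ->
    V *m (A^T *m M) = (A^T *m M) *m V ->
  invmx (A *m V *m A^T) = M *m invmx V *m M^T.
Proof.
move=> Vu AM AQ VQ.
have inv : A *m V *m A^T *m (M *m invmx V *m M^T) = 1%:M.
  rewrite !mulmxA -(mulmxA (A *m V)) -(mulmxA A V) VQ mulmxA AQ.
  by rewrite -(mulmxA A) mulmxV // mulmx1 AM.
by rewrite -[LHS]mulmx1 -inv mulKmx // (mulmx1_unit inv).1.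
Qed.

Section AggregationIndex.
Variables (n r : nat).

Definition agg_index (i : 'I_n) : 'I_(n - r).+1 :=
  if (i < r)%N then ord0 else inord (i - r).+1.

Lemma agg_indexE (i : 'I_n) : (r <= i)%N -> agg_index i = inord (i - r).+1.
Proof. by rewrite /agg_index ltnNge => ->. Qed.

Lemma agg_index_lt (i : 'I_n) : (r <= i)%N -> ((i - r).+1 < (n - r).+1)%N.
Proof. by move=> ri; have := ltn_ord i; lia. Qed.

Lemma Aggr_incidence (R : realType) : Aggr R n r = incidence_mx R agg_index.
Proof.
apply/matrixP => k j; rewrite !mxE /agg_index.
case: ltnP => jr; rewrite -val_eqE /= ?inordK ?agg_index_lt // eq_sym.
  by case: eqP => // k0; congr (_%:R); lia.
by case: eqP => [<- //|k0]; congr (_%:R); lia.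
Qed.

Lemma agg_index_surj : (0 < r)%N -> (r < n)%N -> forall k, exists a, agg_index a = k.
Proof.
move=> r_gt0 rn k; have [k0|k_gt0] := posnP k.
  by exists (Ordinal (ltn_trans r_gt0 rn)); rewrite /agg_index r_gt0; apply: val_inj.
have ltn : (r + k - 1 < n)%N by have := ltn_ord k; lia.
exists (Ordinal ltn); rewrite agg_indexE /=; last by lia.
by apply: val_inj; rewrite /= inordK; lia.
Qed.

Lemma agg_index_inj_out (i : 'I_n) :
  (r <= i)%N -> forall a, agg_index a = agg_index i -> a = i.
Proof.
move=> ri a; rewrite (agg_indexE ri) /agg_index.
case: ltnP => ar /(congr1 val); rewrite /= !inordK ?agg_index_lt //.
by move=> ai; apply: ord_inj; lia.
Qed.

Lemma agg_index_eq (x y : 'I_n) :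
  agg_index x = agg_index y -> x = y \/ (x < r)%N /\ (y < r)%N.
Proof.
case: (ltnP y r) => yr; last by move=> /agg_index_inj_out ->; [left|].
case: (ltnP x r) => xr; first by right.
by rewrite /agg_index yr ltnNge xr /= => /(congr1 val); rewrite /= inordK ?agg_index_lt.
Qed.
End AggregationIndex.

Section BetaModelCovariance.
Variables (R : realType) (n : nat) (beta : 'I_n -> R).

Lemma vij_gt0 i j : 0 < vij beta i j.
Proof. by rewrite divr_gt0 ?expR_gt0 // exprn_gt0 // addr_gt0 ?ltr01 ?expR_gt0. Qed.

Lemma vijC i j : vij beta i j = vij beta j i.
Proof. by rewrite /vij addrC. Qed.

Lemma Vmat_signless_laplacian : Vmat beta = signless_laplacian (vij beta).
Proof. by []. Qed.

Lemma VmatC i j : Vmat beta i j = Vmat beta j i.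
Proof. exact/signless_laplacian_sym/vijC. Qed.

Lemma Vmat_unit : (2 < n)%N -> Vmat beta \in unitmx.
Proof.
rewrite Vmat_signless_laplacian; apply: signless_laplacian_unit => *.
  exact: vijC.
exact: vij_gt0.
Qed.

Lemma Vmat_tperm x y : beta x = beta y ->
  forall i j, Vmat beta (tperm x y i) (tperm x y j) = Vmat beta i j.
Proof.
move=> bxy; rewrite Vmat_signless_laplacian; apply: signless_laplacian_perm => i j.
have bt k : beta (tperm x y k) = beta k by case: tpermP => [->|->|].
by rewrite /vij !bt.
Qed.

Lemma bn_ge0 : 0 <= bn beta.
Proof. exact: bigmax_ge_id. Qed.

Lemma cn_ge0 : 0 <= cn beta.
Proof.
apply/bigmin_geP; split=> [|i _]; first exact: bn_ge0.
apply/bigmin_geP; split=> [|j _]; first exact: bn_ge0.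
by rewrite invr_ge0 ltW ?vij_gt0.
Qed.
End BetaModelCovariance.

Lemma Wmat_Wtmat (R : realType) (n r : nat) (beta : 'I_n -> R) :
    (0 < r)%N -> (r < n)%N -> (2 < n)%N ->
    (forall i j : 'I_n, (i < r)%N -> (j < r)%N -> beta i = beta j) ->
  forall i j : 'I_n, (r <= i)%N -> (r <= j)%N ->
  Wmat beta i j = Wtmat beta r (agg_index r i) (agg_index r j).
Proof.
move=> r_gt0 rn n_gt2 beta_block i j ri rj.
pose f := agg_index r (n := n).
have V_commute : Vmat beta *m ((incidence_mx R f)^T *m fiber_mean_mx R f)
               = ((incidence_mx R f)^T *m fiber_mean_mx R f) *m Vmat beta.
  apply: fiber_proj_commute => [|x y /agg_index_eq [->|[xr yr]]]; first exact: VmatC.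
    by move=> a b; rewrite tperm1 !perm1.
  exact/Vmat_tperm/beta_block.
have invVt : invmx (Vtmat beta r)
           = fiber_mean_mx R f *m invmx (Vmat beta) *m (fiber_mean_mx R f)^T.
  rewrite /Vtmat Aggr_incidence; apply: invmx_compress => //.
  - exact: Vmat_unit.
  - exact/incidence_mul_fiber_mean_tr/agg_index_surj.
  - exact: incidence_mul_fiber_proj.
have fi := agg_index_inj_out ri; have fj := agg_index_inj_out rj.
have Vt_diag : Vtmat beta r (f i) (f i) = Vmat beta i i.
  rewrite /Vtmat Aggr_incidence.
  by apply: mulmx_conj_delta_rows; apply: incidence_mxE_singleton.
rewrite /Wmat /Wtmat [LHS]mxE [RHS]mxE invVt.
rewrite (mulmx_conj_delta_rows _ (fiber_mean_mxE_singleton R fi)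
                                 (fiber_mean_mxE_singleton R fj)).
congr (_ + _); rewrite 2![in LHS]mxE 2![in RHS]mxE Vt_diag.
by rewrite [f i == _]eq_sym fiber_singleton // eq_sym.
Qed.

Theorem lemma13 (R : realType) (r : nat) (hr : (0 < r)%N) :
  exists C : R, exists N : nat, 0 < C /\
    forall (n : nat) (beta : 'I_n -> R),
      (N <= n)%N -> (r < n)%N ->
      (forall i j : 'I_n, (i < r)%N -> (j < r)%N -> beta i = beta j) ->
      forall i j : 'I_n, (r <= i)%N -> (r <= j)%N ->
        `| Wmat beta i j
           - Wtmat beta r (inord (i - r).+1) (inord (j - r).+1) |
        <= C * (bn beta ^+ 6 / (n%:R ^+ 3 * cn beta ^+ 5)).
Proof.
exists 1, 3%N; split=> // n beta n_ge3 rn beta_block i j ri rj.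
rewrite -(agg_indexE ri) -(agg_indexE rj) -Wmat_Wtmat // subrr normr0 mul1r.
by rewrite divr_ge0 ?mulr_ge0 ?exprn_ge0 ?bn_ge0 ?cn_ge0.
Qed.
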